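(* Let $X$ be a topological space. Then $(C(X),\tau_\Gamma)$ is a Baire space.
   Context: $C(X)$ is the set of continuous real-valued functions on $X$, each identified with its graph in $X\times\mathbb{R}$. The graph topology $\tau_\Gamma$ on $C(X)$ has base $\{F_G: G\text{ open in }X\times\mathbb{R}\}$ where $F_G=\{f\in C(X): f\subset G\}$. *)

From Stdlib Require Import Reals Lra.
Open Scope R_scope.

Record topology (X : Type) := Topology {
  is_open : (X -> Prop) -> Prop;
  open_full : is_open (fun _ => True);
  open_inter : forall U V, is_open U -> is_open V -> is_open (fun x => U x /\ V x);
  open_union : forall F : (X -> Prop) -> Prop,
      (forall U, F U -> is_open U) -> is_open (fun x => exists U, F U /\ U x)
}.
Arguments is_open {X} t U.

Definition dense {X : Type} (t : topology X) (D : X -> Prop) : Prop :=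
  forall U, is_open t U -> (exists x, U x) -> exists x, U x /\ D x.

Definition baire_space {X : Type} (t : topology X) : Prop :=
  forall D : nat -> (X -> Prop),
    (forall n, is_open t (D n)) -> (forall n, dense t (D n)) ->
    dense t (fun x => forall n, D n x).

Definition R_open (V : R -> Prop) : Prop :=
  forall r, V r -> exists eps, 0 < eps /\ forall s, Rabs (s - r) < eps -> V s.

Definition continuous {X : Type} (t : topology X) (f : X -> R) : Prop :=
  forall V, R_open V -> is_open t (fun x => V (f x)).

Definition prod_open {X : Type} (t : topology X) (W : X * R -> Prop) : Prop :=
  forall x r, W (x, r) -> exists U eps, is_open t U /\ U x /\ 0 < eps /\
    forall y s, U y -> Rabs (s - r) < eps -> W (y, s).

Definition CX {X : Type} (t : topology X) : Type := { f : X -> R | continuous t f }.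

Definition graph_in {X : Type} {t : topology X} (f : CX t) (G : X * R -> Prop) : Prop :=
  forall x, G (x, proj1_sig f x).

Definition F_ {X : Type} (t : topology X) (G : X * R -> Prop) : CX t -> Prop :=
  fun f => graph_in f G.

Definition graph_open {X : Type} (t : topology X) (O : CX t -> Prop) : Prop :=
  forall f, O f -> exists G, prod_open t G /\ F_ t G f /\ forall g, F_ t G g -> O g.

Lemma graph_open_full {X : Type} (t : topology X) : graph_open t (fun _ => True).
Proof.
  intros f _. exists (fun _ => True). split; [|split; [intros x; exact I| intros; exact I]].
  intros x r _. exists (fun _ => True), 1. split; [exact (open_full _ t)|].
  split; [exact I|]. split; [lra| intros; exact I].
Qed.

Lemma graph_open_inter {X : Type} (t : topology X) (O1 O2 : CX t -> Prop) :
  graph_open t O1 -> graph_open t O2 -> graph_open t (fun f => O1 f /\ O2 f).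
Proof.
  intros H1 H2 f [Hf1 Hf2].
  destruct (H1 f Hf1) as [G1 [HG1 [Hf1' HO1]]].
  destruct (H2 f Hf2) as [G2 [HG2 [Hf2' HO2]]].
  exists (fun p => G1 p /\ G2 p). split; [|split].
  - intros x r [Hx1 Hx2].
    destruct (HG1 x r Hx1) as [U1 [e1 [HU1 [Ux1 [He1 HW1]]]]].
    destruct (HG2 x r Hx2) as [U2 [e2 [HU2 [Ux2 [He2 HW2]]]]].
    exists (fun y => U1 y /\ U2 y), (Rmin e1 e2).
    split; [apply open_inter; assumption|]. split; [split; assumption|].
    split; [apply Rmin_pos; assumption|].
    intros y s [Hy1 Hy2] Hs. split.
    + apply HW1; [assumption| eapply Rlt_le_trans; [exact Hs| apply Rmin_l]].
    + apply HW2; [assumption| eapply Rlt_le_trans; [exact Hs| apply Rmin_r]].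
  - intros x; split; [apply Hf1'|apply Hf2'].
  - intros g Hg; split; [apply HO1|apply HO2]; intros x; apply (Hg x).
Qed.

Lemma graph_open_union {X : Type} (t : topology X) (F : (CX t -> Prop) -> Prop) :
  (forall O, F O -> graph_open t O) -> graph_open t (fun f => exists O, F O /\ O f).
Proof.
  intros H f [O [HO Of]].
  destruct (H O HO f Of) as [G [HG [Gf HGO]]].
  exists G. split; [exact HG|]. split; [exact Gf|].
  intros g Hg. exists O. split; [exact HO| apply HGO; exact Hg].
Qed.

Definition graph_topology {X : Type} (t : topology X) : topology (CX t) :=
  Topology (CX t) (graph_open t) (graph_open_full t) (graph_open_inter t)
    (graph_open_union t).

From Stdlib Require Import Reals.
From Stdlib Require Import Lra Lia Classical ClassicalEpsilon FunctionalExtensionality PropExtensionality.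
Open Scope R_scope.

(* We run the usual Baire argument:
   given a nonempty open W and open dense sets D n, we choose inductively
   functions f_n and open sets G_n of X x R with f_n ⊂ G_n and
   F_(G_n) ⊆ W ∩ D_0 ∩ ... ∩ D_n.  The new point is how G_(n+1) is kept
   "inside" G_n: we shrink G_n to the open set [shrink n f_n G_n] of points
   lying in a small tube (of height at most 2^-n) around f_n whose doubled
   tube still fits in G_n.  Then the f_n are uniformly Cauchy, their uniform
   limit f is continuous, and the doubled-tube condition forces the graph of
   f into every G_n, so f ∈ W ∩ ⋂ D_n. *)

Lemma Rabs_sub_triang (a b c : R) : Rabs (a - c) <= Rabs (a - b) + Rabs (b - c).
Proof. exact (Rdist_tri a c b). Qed.

Lemma pow_half_small (eps : R) : 0 < eps -> exists N, (/2)^N < eps.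
Proof.
  intros Heps. destruct (pow_lt_1_zero (/2)) with (y := eps) as [N HN].
  - rewrite Rabs_pos_eq; lra.
  - exact Heps.
  - exists N. specialize (HN N (le_n _)).
    rewrite Rabs_pos_eq in HN; [exact HN | apply pow_le; lra].
Qed.

Lemma limit_bound (u : nat -> R) (l c b : R) (n : nat) :
  Un_cv u l -> (forall m, (n <= m)%nat -> Rabs (u m - c) <= b) -> Rabs (l - c) <= b.
Proof.
  intros Hu Hb. destruct (Rle_or_lt (Rabs (l - c)) b) as [H | H]; [exact H |].
  destruct (Hu (Rabs (l - c) - b)) as [N HN]; [lra |].
  specialize (HN (max N n) (Nat.le_max_l _ _)).
  specialize (Hb (max N n) (Nat.le_max_r _ _)). unfold Rdist in HN.
  pose proof (Rabs_sub_triang l (u (max N n)) c). rewrite Rabs_minus_sym in HN. lra.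
Qed.

Lemma geometric_cauchy_cv (u : nat -> R) :
  (forall n m, (n <= m)%nat -> Rabs (u m - u n) <= (/2)^n) -> {l | Un_cv u l}.
Proof.
  intros Hbd. apply R_complete. intros eps Heps.
  destruct (pow_half_small (eps / 2)) as [N HN]; [lra |]. exists N.
  intros n m Hn Hm. unfold Rdist.
  pose proof (Hbd N n Hn). pose proof (Hbd N m Hm).
  pose proof (Rabs_sub_triang (u n) (u N) (u m)).
  rewrite (Rabs_minus_sym (u N)) in H1. lra.
Qed.

Section UniformLimits.
Context {X : Type} (t : topology X).

Lemma open_preimage_ball (f : X -> R) (c r : R) :
  continuous t f -> is_open t (fun z => Rabs (f z - c) < r).
Proof.
  intros Hf. apply (Hf (fun v => Rabs (v - c) < r)).
  intros v Hv. exists (r - Rabs (v - c)). split; [lra |].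
  intros s Hs. pose proof (Rabs_sub_triang s v c). lra.
Qed.

Lemma open_of_neighbourhoods (V : X -> Prop) :
  (forall x, V x -> exists U, is_open t U /\ U x /\ forall z, U z -> V z) ->
  is_open t V.
Proof.
  intros Hloc.
  replace V with (fun x => exists U, (is_open t U /\ forall z, U z -> V z) /\ U x).
  - apply open_union. intros U [HU _]. exact HU.
  - apply functional_extensionality. intros x. apply propositional_extensionality.
    split.
    + intros [U [[_ HUV] Ux]]. exact (HUV x Ux).
    + intros Vx. destruct (Hloc x Vx) as [U [HU [Ux HUV]]]. exists U. tauto.
Qed.

Lemma uniform_limit_continuous (fs : nat -> X -> R) (L : X -> R) :
  (forall n, continuous t (fs n)) ->
  (forall n x, Rabs (L x - fs n x) <= (/2)^n) ->
  continuous t L.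
Proof.
  intros Hfs Hlim V HV. apply open_of_neighbourhoods. intros x Vx.
  destruct (HV _ Vx) as [eps [Heps Hball]].
  destruct (pow_half_small (eps / 3)) as [N HN]; [lra |].
  exists (fun z => Rabs (fs N z - fs N x) < eps / 3). split; [| split].
  - apply open_preimage_ball, Hfs.
  - unfold Rminus. rewrite Rplus_opp_r, Rabs_R0. lra.
  - intros z Hz. apply Hball.
    pose proof (Rabs_sub_triang (L z) (fs N z) (L x)).
    pose proof (Rabs_sub_triang (fs N z) (fs N x) (L x)).
    pose proof (Hlim N z). pose proof (Hlim N x).
    rewrite (Rabs_minus_sym (fs N x)) in H0. lra.
Qed.

End UniformLimits.

Section Shrinking.
Context {X : Type} (t : topology X).

Definition shrink (n : nat) (f : X -> R) (G : X * R -> Prop) : X * R -> Prop :=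
  fun p => exists U e, is_open t U /\ U (fst p) /\ 0 < e /\ e <= (/2)^n /\
    (forall z s, U z -> Rabs (s - f z) < 2 * e -> G (z, s)) /\
    (forall z, U z -> Rabs (snd p - f z) < e).

(* The shrinking is open: nearby points admit the same height e on a smaller
   neighbourhood, on which f varies little. *)
Lemma shrink_open (n : nat) (f : X -> R) (G : X * R -> Prop) :
  continuous t f -> prod_open t (shrink n f G).
Proof.
  intros Hf x y [U [e [HU [Ux [He [Hen [Htube Hy]]]]]]]. simpl in *.
  pose proof (Hy x Ux) as Hyx.
  set (m := e - Rabs (y - f x)).
  assert (Hm : 0 < m) by (unfold m; lra).
  set (U' := fun z => U z /\ Rabs (f z - f x) < m / 4).
  assert (HU' : is_open t U') by (apply open_inter; [exact HU | apply open_preimage_ball, Hf]).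
  exists U', (m / 4). split; [exact HU' |].
  split; [split; [exact Ux | unfold Rminus; rewrite Rplus_opp_r, Rabs_R0; lra] |].
  split; [lra |].
  intros z s [Uz Hz] Hs. exists U', e.
  split; [exact HU' |]. split; [split; assumption |].
  split; [exact He |]. split; [exact Hen |]. split.
  - intros z' s' [Uz' _] Hs'. apply Htube; assumption.
  - intros z' [Uz' Hz']. simpl.
    pose proof (Rabs_sub_triang s y (f z')).
    pose proof (Rabs_sub_triang y (f x) (f z')).
    rewrite (Rabs_minus_sym (f x) (f z')) in H0. unfold m in *. lra.
Qed.

Lemma shrink_graph (n : nat) (f : X -> R) (G : X * R -> Prop) :
  continuous t f -> prod_open t G -> (forall x, G (x, f x)) ->
  forall x, shrink n f G (x, f x).
Proof.
  intros Hf HGo HG x.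
  destruct (HGo x (f x) (HG x)) as [U [e0 [HU [Ux [He0 Hbox]]]]].
  assert (Hp : 0 < (/2)^n) by (apply pow_lt; lra).
  set (e := Rmin (e0 / 6) ((/2)^n)).
  assert (He : 0 < e) by (apply Rmin_pos; lra).
  assert (He1 : e <= e0 / 6) by apply Rmin_l.
  exists (fun z => U z /\ Rabs (f z - f x) < e), e.
  split; [apply open_inter; [exact HU | apply open_preimage_ball, Hf] |].
  split; [split; [exact Ux | simpl; unfold Rminus; rewrite Rplus_opp_r, Rabs_R0; lra] |].
  split; [exact He |]. split; [apply Rmin_r |]. split.
  - intros z s [Uz Hz] Hs. apply Hbox; [exact Uz |].
    pose proof (Rabs_sub_triang s (f z) (f x)). lra.
  - intros z [Uz Hz]. simpl. rewrite Rabs_minus_sym. exact Hz.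
Qed.

Lemma shrink_sub (n : nat) (f : X -> R) (G : X * R -> Prop) (p : X * R) :
  shrink n f G p -> G p.
Proof.
  destruct p as [x y]. intros [U [e [HU [Ux [He [Hen [Htube Hy]]]]]]]. simpl in *.
  apply Htube; [exact Ux |]. pose proof (Hy x Ux). lra.
Qed.

Lemma shrink_close (n : nat) (f : X -> R) (G : X * R -> Prop) (x : X) (y : R) :
  shrink n f G (x, y) -> Rabs (y - f x) < (/2)^n.
Proof.
  intros [U [e [HU [Ux [He [Hen [Htube Hy]]]]]]]. simpl in *.
  specialize (Hy x Ux). lra.
Qed.

Lemma shrink_far (n : nat) (f : X -> R) (G : X * R -> Prop) (x : X) (y z : R) :
  shrink n f G (x, y) -> ~ G (x, z) -> Rabs (y - f x) <= Rabs (z - f x) / 2.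
Proof.
  intros [U [e [HU [Ux [He [Hen [Htube Hy]]]]]]] Hz. simpl in *.
  specialize (Hy x Ux).
  destruct (Rle_or_lt (2 * e) (Rabs (z - f x))) as [H | H]; [lra |].
  exfalso. exact (Hz (Htube x z Ux H)).
Qed.

End Shrinking.

Section ShrinkingLimit.
Context {X : Type} (t : topology X).
Variables (fs : nat -> X -> R) (Gs : nat -> X * R -> Prop).
Hypothesis fs_continuous : forall n, continuous t (fs n).
Hypothesis fs_on : forall n x, Gs n (x, fs n x).
Hypothesis fs_shrink : forall n m, (n < m)%nat -> forall x, shrink t n (fs n) (Gs n) (x, fs m x).

Lemma shrinking_cauchy (x : X) (n m : nat) :
  (n <= m)%nat -> Rabs (fs m x - fs n x) <= (/2)^n.
Proof.
  intros Hnm. destruct (Nat.eq_dec n m) as [<- | Hne].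
  - unfold Rminus. rewrite Rplus_opp_r, Rabs_R0. apply pow_le. lra.
  - left. apply (shrink_close t n (fs n) (Gs n)), fs_shrink. lia.
Qed.

Definition shrinking_limit (x : X) : R :=
  proj1_sig (geometric_cauchy_cv (fun m => fs m x) (shrinking_cauchy x)).

Lemma shrinking_limit_cv (x : X) : Un_cv (fun m => fs m x) (shrinking_limit x).
Proof. exact (proj2_sig (geometric_cauchy_cv _ (shrinking_cauchy x))). Qed.

Lemma shrinking_limit_bound (n : nat) (x : X) :
  Rabs (shrinking_limit x - fs n x) <= (/2)^n.
Proof. exact (limit_bound _ _ _ _ n (shrinking_limit_cv x) (shrinking_cauchy x n)). Qed.

Lemma shrinking_limit_continuous : continuous t shrinking_limit.
Proof. exact (uniform_limit_continuous t fs _ fs_continuous shrinking_limit_bound). Qed.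

(* The graph of the limit lies in every G_n: were (x, L x) outside G_n, every
   later f_m x would be within d/2 of f_n x, where d = |L x - f_n x|, hence so
   would L x; thus d = 0 and (x, L x) = (x, f_n x) ∈ G_n after all. *)
Lemma shrinking_limit_on (n : nat) (x : X) : Gs n (x, shrinking_limit x).
Proof.
  apply NNPP. intros Hout.
  set (d := Rabs (shrinking_limit x - fs n x)).
  assert (Hd : d <= d / 2).
  { apply (limit_bound _ _ _ _ (S n) (shrinking_limit_cv x)). intros m Hm.
    apply (shrink_far t n (fs n) (Gs n)); [apply fs_shrink; lia | exact Hout]. }
  assert (Heq : shrinking_limit x = fs n x).
  { destruct (Req_dec (shrinking_limit x) (fs n x)) as [E | E]; [exact E |].
    pose proof (Rabs_pos_lt (shrinking_limit x - fs n x) ltac:(intro; apply E; lra)).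
    fold d in H. lra. }
  apply Hout. rewrite Heq. apply fs_on.
Qed.

End ShrinkingLimit.

Lemma dependent_choice_from {A : Type} (P : nat -> A -> Prop)
    (Step : nat -> A -> A -> Prop) (a0 : A) :
  P 0%nat a0 ->
  (forall n a, P n a -> exists b, P (S n) b /\ Step n a b) ->
  exists s : nat -> A, s 0%nat = a0 /\ forall n, P n (s n) /\ Step n (s n) (s (S n)).
Proof.
  intros H0 Hstep.
  set (next := fun n (a : {a | P n a}) =>
    constructive_indefinite_description _ (Hstep n _ (proj2_sig a))).
  pose (sq := fix sq (n : nat) : {a | P n a} :=
    match n with
    | O => exist _ a0 H0
    | S k => exist _ (proj1_sig (next k (sq k))) (proj1 (proj2_sig (next k (sq k))))
    end).
  exists (fun n => proj1_sig (sq n)). split; [reflexivity |].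
  intros n. split; [exact (proj2_sig (sq n)) | exact (proj2 (proj2_sig (next n (sq n))))].
Qed.

Lemma decreasing_chain {T : Type} (A : nat -> T -> Prop) :
  (forall n a, A (S n) a -> A n a) -> forall n m a, (n <= m)%nat -> A m a -> A n a.
Proof. intros Hdec n m a Hnm. induction Hnm; auto. Qed.

Section GraphTopology.
Context {X : Type} (t : topology X).

Lemma basic_graph_open (G : X * R -> Prop) : prod_open t G -> graph_open t (F_ t G).
Proof. intros HG f Hf. exists G. auto. Qed.

Lemma dense_refine (O D : CX t -> Prop) :
  graph_open t O -> (exists f, O f) ->
  is_open (graph_topology t) D -> dense (graph_topology t) D ->
  exists g G, prod_open t G /\ F_ t G g /\ forall h, F_ t G h -> O h /\ D h.
Proof.
  intros HO HOne HDo HDd.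
  destruct (HDd O HO HOne) as [g [Og Dg]].
  destruct (graph_open_inter t O D HO HDo g (conj Og Dg)) as [G [HG [Gg HGsub]]].
  exists g, G. auto.
Qed.

End GraphTopology.

Section BaireConstruction.
Context {X : Type} (t : topology X) (D : nat -> CX t -> Prop).
Hypothesis D_open : forall n, is_open (graph_topology t) (D n).
Hypothesis D_dense : forall n, dense (graph_topology t) (D n).

Definition stage (n : nat) (p : CX t * (X * R -> Prop)) : Prop :=
  prod_open t (snd p) /\ F_ t (snd p) (fst p) /\ forall g, F_ t (snd p) g -> D n g.

Definition refines (n : nat) (p q : CX t * (X * R -> Prop)) : Prop :=
  forall g, F_ t (snd q) g -> F_ t (shrink t n (proj1_sig (fst p)) (snd p)) g.

(* Density of D (S n) in the open set F_(shrink n f G) yields the next stage. *)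
Lemma stage_step (n : nat) (p : CX t * (X * R -> Prop)) :
  stage n p -> exists q, stage (S n) q /\ refines n p q.
Proof.
  destruct p as [[f Hf] G]. intros [HG [Hon _]]. simpl in *.
  destruct (dense_refine t (F_ t (shrink t n f G)) (D (S n))
    (basic_graph_open t _ (shrink_open t n f G Hf))
    (ex_intro _ (exist _ f Hf) (shrink_graph t n f G Hf HG Hon))
    (D_open (S n)) (D_dense (S n))) as [g [G' [HG' [Hg HG'sub]]]].
  exists (g, G'). unfold stage, refines. simpl. firstorder.
Qed.

Lemma refining_sequence_limit (s : nat -> CX t * (X * R -> Prop)) :
  (forall n, stage n (s n) /\ refines n (s n) (s (S n))) ->
  exists f : CX t, forall n, F_ t (snd (s n)) f.
Proof.
  intros Hs.
  set (fs := fun n => proj1_sig (fst (s n))).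
  set (Gs := fun n => snd (s n)).
  assert (Hon : forall n x, Gs n (x, fs n x)) by (intros n; apply (proj1 (Hs n))).
  assert (Hnested : forall n m h, (n <= m)%nat -> F_ t (Gs m) h -> F_ t (Gs n) h).
  { apply decreasing_chain. intros n h Hh x.
    apply (shrink_sub t n (fs n)), (proj2 (Hs n)), Hh. }
  assert (Hshrink : forall n m, (n < m)%nat -> forall x, shrink t n (fs n) (Gs n) (x, fs m x)).
  { intros n m Hnm. apply (proj2 (Hs n)), (Hnested (S n) m _ Hnm). exact (Hon m). }
  exists (exist _ _ (shrinking_limit_continuous t fs Gs
    (fun n => proj2_sig (fst (s n))) Hshrink)).
  intros n x. exact (shrinking_limit_on t fs Gs Hon Hshrink n x).
Qed.

End BaireConstruction.

Theorem proposition2p3 (X : Type) (t : topology X) :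
  baire_space (graph_topology t).
Proof.
  intros D HDo HDd W HW HWne.
  destruct (dense_refine t W (D 0%nat) HW HWne (HDo 0%nat) (HDd 0%nat))
    as [g0 [G0 [HG0 [Hg0 HG0sub]]]].
  assert (Hstage0 : stage t D 0 (g0, G0)).
  { split; [exact HG0 |]. split; [exact Hg0 |]. intros h Hh. apply (HG0sub h Hh). }
  destruct (dependent_choice_from (stage t D) (refines t) (g0, G0) Hstage0
    (stage_step t D HDo HDd)) as [s [Hs0 Hs]].
  destruct (refining_sequence_limit t D s Hs) as [f Hf].
  exists f. split.
  - apply HG0sub. specialize (Hf 0%nat). rewrite Hs0 in Hf. exact Hf.
  - intros n. exact (proj2 (proj2 (proj1 (Hs n))) f (Hf n)).
Qed.
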